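(* Let $r,n,s_1,\ldots,s_r\in\mathbb{N}$ (positive integers) with $r\leq n$. If $n\geq 2$, then $$\overline{H}_n^{\star}(s_1,\ldots,s_r)=\sum_{0\leq k_1\leq k_2\leq\cdots\leq k_r\leq n-1}\prod_{j=1}^{r}\frac{1}{(2k_j+1)^{s_j}}$$ is not an integer.
   Context: $\mathbb{N}$ denotes the set of positive integers. $\overline{H}_n^{\star}(s_1,\ldots,s_r)$ is called the odd multiple harmonic star sum. *)

From HB Require Import structures.
From mathcomp Require Import all_boot all_order all_algebra.
Set Implicit Arguments. Unset Strict Implicit. Unset Printing Implicit Defensive.
Import Order.TTheory GRing.Theory Num.Theory.
Local Open Scope ring_scope.

(* Odd multiple harmonic star sum
   Hbar*_n(s_1,...,s_r) = sum_{0 <= k_1 <= ... <= k_r <= n-1}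
                            prod_{j=1}^r 1/(2 k_j + 1)^{s_j},
   with indices j in 'I_r (0-based) and k_j in 'I_n = {0,...,n-1}. *)
Definition odd_mhs_star (r n : nat) (s : 'I_r -> nat) : rat :=
  \sum_(k : {ffun 'I_r -> 'I_n} |
          [forall i : 'I_r, forall j : 'I_r, (i <= j)%N ==> (k i <= k j)%N])
    \prod_(j < r) (((k j).*2.+1)%:R ^+ (s j))^-1.

From HB Require Import structures.
From mathcomp Require Import all_boot all_order all_algebra.
From mathcomp Require Import ring zify.
Import Order.TTheory GRing.Theory Num.Theory.
Local Open Scope ring_scope.

(* Let 3^e be the largest power of 3 below 2n.  It is the only odd number
   below 2n divisible by 3^e, because the next odd multiple of 3^e is
   3^(e+1) > 2n - 1.  After multiplication by 3^(e S), S = s_1 + ... + s_r,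
   every term of the sum lies in Z_(3), and every term lies in 3 Z_(3) except
   the one with all k_j = (3^e - 1)/2, which becomes 1.  Hence 3^(e S) times
   the sum is 1 modulo 3 Z_(3), while 3^(e S) z lies in 3 Z_(3) for every
   integer z. *)

Section PIntegral.
Variable p : nat.

(* For a prime [p], [pintegral p] is Z_(p) and [pmultiple p] is p Z_(p). *)
Definition pintegral : {pred rat} := [pred x | coprime p `|denq x|].

Lemma pintegral_frac (a b : int) :
  coprime p `|b| -> (a%:~R / b%:~R : rat) \in pintegral.
Proof.
rewrite inE; case: divqP => [_ _ | k x _]; first by rewrite coprimen1.
by rewrite (abszM k) coprimeMr => /andP[].
Qed.

Lemma pintegral_subring : subring_closed pintegral.
Proof.
have den_neq0 (x : rat) : (denq x)%:~R != 0 :> rat by rewrite intr_eq0.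
split=> [|x y|x y]; first by rewrite inE -[1]/(1%:Q) denq_int coprimen1.
- rewrite !inE => px py; rewrite -[x]divq_num_den -[y]divq_num_den.
  have -> : (numq x)%:~R / (denq x)%:~R - (numq y)%:~R / (denq y)%:~R =
      (numq x * denq y - numq y * denq x)%:~R / (denq x * denq y)%:~R :> rat.
    by rewrite intrB !intrM; field; rewrite !den_neq0.
  by apply: pintegral_frac; rewrite abszM coprimeMr px py.
- rewrite !inE => px py; rewrite -[x]divq_num_den -[y]divq_num_den.
  rewrite mulf_div -!intrM; apply: pintegral_frac.
  by rewrite abszM coprimeMr px py.
Qed.

End PIntegral.

HB.instance Definition _ p := GRing.isSubringClosed.Build rat (pintegral p)
  (pintegral_subring p).

Section PMultiple.
Variable p : nat.

Definition pmultiple : {pred rat} := [pred x | x / p%:R \in pintegral p].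

Lemma pmultipleE x : (x \in pmultiple) = (x / p%:R \in pintegral p).
Proof. by []. Qed.

Lemma pmultiple_zmod : zmod_closed pmultiple.
Proof.
split=> [|x y]; first by rewrite pmultipleE mul0r rpred0.
by rewrite !pmultipleE mulrBl; apply: rpredB.
Qed.

Lemma pmultipleMl x y :
  x \in pintegral p -> y \in pmultiple -> x * y \in pmultiple.
Proof. by rewrite !pmultipleE -mulrA; apply: rpredM. Qed.

Lemma pmultiple_pmul x :
  (0 < p)%N -> x \in pintegral p -> p%:R * x \in pmultiple.
Proof.
by move=> p_gt0; rewrite pmultipleE mulrAC divff ?mul1r // pnatr_eq0 -lt0n.
Qed.

Lemma pmultiple1 : (1 < p)%N -> 1 \notin pmultiple.
Proof.
move=> p_gt1; rewrite pmultipleE mul1r -[p%:R]/((p%:Z)%:~R) inE.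
rewrite denqVz /=; last by case: p p_gt1.
by rewrite /coprime gcdnn neq_ltn p_gt1 orbT.
Qed.

End PMultiple.

HB.instance Definition _ p := GRing.isZmodClosed.Build rat (pmultiple p)
  (pmultiple_zmod p).

Section PrimePowerRatios.
Variables p m : nat.
Hypotheses (p_prime : prime p) (m_gt0 : (0 < m)%N).

Lemma logn_leq_of_ltn_exp e : (m < p ^ e.+1)%N -> (logn p m <= e)%N.
Proof.
move=> m_lt; rewrite -ltnS -(ltn_exp2l _ _ (prime_gt1 p_prime)).
exact: leq_ltn_trans (dvdn_leq m_gt0 (pfactor_dvdnn p m)) m_lt.
Qed.

Lemma pintegral_pexp_div e :
  (logn p m <= e)%N -> (p ^ e)%:R / m%:R \in pintegral p.
Proof.
move=> le_v_e; have [u p_u m_eq] := pfactor_coprime p_prime m_gt0.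
move: le_v_e; set v := logn p m => le_v_e.
have pv_neq0 : (p ^ v)%:R != 0 :> rat.
  by rewrite pnatr_eq0 -lt0n expn_gt0 prime_gt0.
rewrite m_eq -(subnK le_v_e) expnD !natrM invfM mulrACA divff // mulr1.
exact: (@pintegral_frac p (p ^ (e - v))%N u).
Qed.

Lemma pmultiple_pexp_div e :
  (logn p m < e)%N -> (p ^ e)%:R / m%:R \in pmultiple p.
Proof.
case: e => // e lt_v_e; rewrite expnS natrM -mulrA.
by apply: pmultiple_pmul; [exact: prime_gt0 | exact: pintegral_pexp_div].
Qed.

End PrimePowerRatios.

Lemma pmultiple_prod p (I : finType) (x : I -> rat) (s : I -> nat) (j : I) :
  (forall i, x i \in pintegral p) -> x j \in pmultiple p -> (0 < s j)%N ->
  \prod_i x i ^+ s i \in pmultiple p.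
Proof.
move=> xP xjP sj_gt0; rewrite (bigD1 j) //= -(prednK sj_gt0) exprSr mulrAC.
apply: pmultipleMl => //; rewrite rpredM ?rpredX //.
by apply: rpred_prod => i _; rewrite rpredX.
Qed.

Lemma odd_pow3_multiple_eq {m e : nat} :
  odd m -> (m < 3 ^ e.+1)%N -> (3 ^ e %| m)%N -> m = (3 ^ e)%N.
Proof.
move=> m_odd m_lt /dvdnP[q m_eq]; move: m_odd m_lt.
rewrite m_eq oddM => /andP[q_odd _].
rewrite expnS ltn_pmul2r ?expn_gt0 //.
by case: q q_odd {m_eq} => [|[|[|q]]] //= _ _; rewrite mul1n.
Qed.

Section TopPowerOfThree.
Variable n : nat.
Hypothesis n_gt1 : (1 < n)%N.

Definition top_exp3 := trunc_log 3 n.*2.-1.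

Definition top_index3 := (3 ^ top_exp3).-1./2.

Lemma top_exp3_bounds : (3 ^ top_exp3 <= n.*2.-1 < 3 ^ top_exp3.+1)%N.
Proof. by apply: trunc_log_bounds => //; rewrite -!subn1 -!mul2n; lia. Qed.

Lemma top_exp3_gt0 : (0 < top_exp3)%N.
Proof. by rewrite trunc_log_gt0 /= -!subn1 -!mul2n; lia. Qed.

Lemma top_index3E : (top_index3.*2.+1 = 3 ^ top_exp3)%N.
Proof.
rewrite /top_index3; have : odd (3 ^ top_exp3) by rewrite oddX orbT.
case: (3 ^ top_exp3)%N => // m /= m_even.
by rewrite -[in RHS](odd_double_half m) (negPf m_even).
Qed.

Lemma top_index3_lt : (top_index3 < n)%N.
Proof.
by have := top_exp3_bounds; have := top_index3E; rewrite -!subn1 -!mul2n; lia.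
Qed.

Lemma odd_lt_pow3_top k : (k < n)%N -> (k.*2.+1 < 3 ^ top_exp3.+1)%N.
Proof. by have := top_exp3_bounds; rewrite -!subn1 -!mul2n; lia. Qed.

Lemma pintegral_top_ratio k :
  (k < n)%N -> (3 ^ top_exp3)%:R / (k.*2.+1)%:R \in pintegral 3.
Proof.
move=> k_lt; apply: pintegral_pexp_div => //.
by apply: logn_leq_of_ltn_exp => //; apply: odd_lt_pow3_top.
Qed.

Lemma pmultiple_top_ratio k :
  (k < n)%N -> k != top_index3 ->
  (3 ^ top_exp3)%:R / (k.*2.+1)%:R \in pmultiple 3.
Proof.
move=> k_lt k_neq; apply: pmultiple_pexp_div => //.
rewrite ltn_neqAle logn_leq_of_ltn_exp ?odd_lt_pow3_top // andbT.
apply: contra k_neq => /eqP v_eq.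
have k_odd : odd k.*2.+1 by rewrite /= odd_double.
have top_dvd : (3 ^ top_exp3 %| k.*2.+1)%N by rewrite pfactor_dvdn // v_eq.
have := odd_pow3_multiple_eq k_odd (odd_lt_pow3_top k k_lt) top_dvd.
by rewrite -top_index3E => /succn_inj/(can_inj doubleK) ->.
Qed.

Variables (r : nat) (s : 'I_r -> nat).
Hypothesis s_gt0 : forall j, (0 < s j)%N.

Lemma pmultiple_scaled_odd_mhs_star :
  (3 ^ top_exp3)%:R ^+ (\sum_j s j) * odd_mhs_star n s - 1 \in pmultiple 3.
Proof.
set T : rat := (3 ^ top_exp3)%:R.
have scaled_term (k : {ffun 'I_r -> 'I_n}) :
    T ^+ (\sum_j s j) * \prod_j (((k j).*2.+1)%:R ^+ s j)^-1 =
    \prod_j (T / ((k j).*2.+1)%:R) ^+ s j.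
  by rewrite -prodrXr -big_split; apply: eq_bigr => j _; rewrite exprMn exprVn.
pose k_top : {ffun 'I_r -> 'I_n} := [ffun _ => Ordinal top_index3_lt].
rewrite /odd_mhs_star mulr_sumr (bigD1 k_top) /=; last first.
  by apply/forallP => i; apply/forallP => j; rewrite !ffunE leqnn implybT.
rewrite scaled_term big1 => [|j _]; last first.
  by rewrite ffunE /= top_index3E divff ?expr1n // pnatr_eq0 -lt0n expn_gt0.
rewrite [1 + _]addrC addrK; apply: rpred_sum => k /andP[_ k_neq].
have /existsP[j kj_neq] : [exists j, (k j : nat) != top_index3].
  apply: contraNT k_neq; rewrite negb_exists => /forallP k_eq.
  apply/eqP/ffunP => j; apply/val_inj; rewrite ffunE /=.
  by apply/eqP/negbNE/k_eq.
rewrite scaled_term; apply: (pmultiple_prod _ _ _ _ j) => // [i|].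
  exact: pintegral_top_ratio.
exact: pmultiple_top_ratio.
Qed.

End TopPowerOfThree.

Theorem theorem1p1 (r n : nat) (s : 'I_r -> nat) :
  (0 < r)%N -> (0 < n)%N -> (forall j, (0 < s j)%N) -> (r <= n)%N ->
  (2 <= n)%N ->
  ~ (exists z : int, odd_mhs_star n s = z%:~R).
Proof.
move=> r_gt0 _ s_gt0 _ n_gt1 [z mhs_eq].
set T : rat := (3 ^ top_exp3 n)%:R.
have T_pmultiple : T \in pmultiple 3.
  rewrite /T -(prednK (top_exp3_gt0 _ n_gt1)) expnS natrM.
  by apply: pmultiple_pmul; rewrite ?rpred_nat.
have TSz_pmultiple : T ^+ (\sum_j s j) * z%:~R \in pmultiple 3.
  rewrite -prodrXr mulrC; apply: pmultipleMl; first exact: rpred_int.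
  by apply: (pmultiple_prod _ _ _ _ (Ordinal r_gt0)) => // i; apply: rpred_nat.
apply: (negP (pmultiple1 3 isT)).
rewrite -[1](subKr (T ^+ (\sum_j s j) * z%:~R)) rpredB //.
by rewrite -mhs_eq; apply: pmultiple_scaled_odd_mhs_star.
Qed.
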